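(* The line bundle $\mathcal{L}$ on $\mathbb{W}$ is ample in Mumford's sense: the nonvanishing loci $\{p\in\mathbb{W}: s(p)\neq 0\}$ of global sections $s$ of $\mathcal{L}^n$, for $n\geq 1$, form a basis of the Zariski topology of $\mathbb{W}$.
   Context: $\mathbb{W}$ is the ind-scheme over $\mathbb{Z}$ obtained by gluing infinitely many affine planes $\mathbb{A}^2_n=\mathsf{Spec}\,\mathbb{Z}[x_n,y_n]$, $n\in\mathbb{Z}$, where $\mathbb{A}^2_n\setminus\{x_n=0\}$ is identified with $\mathbb{A}^2_{n+1}\setminus\{y_{n+1}=0\}$ via $y_{n+1}=x_n^{-1}$ and $x_ny_n=x_{n+1}y_{n+1}$. $\mathcal{L}$ is the line bundle on $\mathbb{W}$ obtained by gluing the trivial line bundles on the charts $\mathbb{A}^2_n$ using the transition function $x_n$ on the overlap $\mathbb{A}^2_n\cap\mathbb{A}^2_{n+1}$. *)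

From HB Require Import structures.
From mathcomp Require Import all_boot all_order all_algebra.
From mathcomp Require Import mpoly.
Set Implicit Arguments. Unset Strict Implicit. Unset Printing Implicit Defensive.
Import Order.TTheory GRing.Theory Num.Theory.
Local Open Scope ring_scope.

(* Coordinate ring of each chart A^2_k = Spec Z[x_k, y_k]. *)
Notation R2 := {mpoly int[2]}.
(* Auxiliary ring Z[a,b,c]; modulo (a c - 1) it is Z[x_k, x_k^-1, y_k],
   the coordinate ring of the overlap A^2_k \ {x_k = 0}. *)
Notation R3 := {mpoly int[3]}.

Definition X2 : R2 := 'X_(@Ordinal 2 0 isT).
Definition Y2 : R2 := 'X_(@Ordinal 2 1 isT).
Definition A3 : R3 := 'X_(@Ordinal 3 0 isT).
Definition B3 : R3 := 'X_(@Ordinal 3 1 isT).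
Definition C3 : R3 := 'X_(@Ordinal 3 2 isT).

Definition alpha (p : R2) : R3 := comp_mpoly [tuple A3; B3] p.
(* beta : Z[x_{k+1},y_{k+1}] -> Z[a,b,c], x_{k+1} |-> a^2 b, y_{k+1} |-> c,
   i.e. (mod ac-1) y_{k+1} = x_k^{-1}, x_{k+1} = x_k y_k / y_{k+1}. *)
Definition beta (p : R2) : R3 := comp_mpoly [tuple A3 ^+ 2 * B3; C3] p.

Definition in_overlap_ideal (q : R3) : Prop := exists h : R3, q = h * (A3 * C3 - 1).

Definition is_prime_ideal (T : comRingType) (P : T -> Prop) : Prop :=
  [/\ P 0, (forall a b, P a -> P b -> P (a + b)),
      (forall a b, P b -> P (a * b)), ~ P 1 &
      (forall a b, P (a * b) -> P a \/ P b)].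

(* Points of W: pairs (k, P), P a prime of Z[x_k,y_k], modulo the gluing.
   glued k P Q : the point P of A^2_k (with x_k notin P) is identified with
   the point Q of A^2_{k+1} (with y_{k+1} notin Q): both come from one prime
   of the common localization Z[a,b,c]/(ac-1) = Z[x_k,y_k][x_k^-1]. *)
Definition glued (P Q : R2 -> Prop) : Prop :=
  exists p3 : R3 -> Prop, [/\ is_prime_ideal p3, p3 (A3 * C3 - 1),
     (forall f, P f <-> p3 (alpha f)) & (forall g, Q g <-> p3 (beta g))].


Definition W_open (U : int -> (R2 -> Prop) -> Prop) : Prop :=
  (forall k P Q, is_prime_ideal P -> is_prime_ideal Q -> glued P Q ->
      (U k P <-> U (k + 1) Q)) /\
  (forall k, exists S : R2 -> Prop, forall P, is_prime_ideal P ->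
      (U k P <-> exists g, S g /\ ~ P g)).

(* Global sections of L^n: s_k in Z[x_k,y_k] for every chart, with
   s_k = x_k^n * s_{k+1} on the overlap (transition function x_k of L). *)
Definition section_Ln (n : nat) (s : int -> R2) : Prop :=
  forall k : int, in_overlap_ideal (alpha (s k) - A3 ^+ n * beta (s (k + 1))).

Definition nonvanishing (s : int -> R2) : int -> (R2 -> Prop) -> Prop :=
  fun k P => ~ P (s k).

(* Openness: on the overlap of charts [k] and [k + 1], [s_k = x_k^n s_(k+1)]
   with [x_k] a unit, so a prime avoids [s_k] iff the glued prime avoids
   [s_(k+1)].
   Basis: if [g] does not vanish at a point of chart [k] and [D(g)] lies in [U],
   extend [g] monomial by monomial to a section of [L^(2N)], [N > deg g], by
   sending [x^p y^q] to [x^(e (d - 1)) y^(e d)] on chart [k + d], with [e]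
   quadratic in [d]. Then [s_j] is a multiple of [y_j] for [j > k] and of [x_j]
   for [j < k], so each point of chart [j] where [s_j] does not vanish lies in
   the overlap with the neighbouring chart towards [k]; by induction it is glued
   to a point of [D(g)], hence lies in [U]. Primes are glued across an overlap
   by localization: a prime of [Z[x,y]] avoiding [x] extends to
   [Z[x,y][1/x] = Z[a,b,c]/(a c - 1)], realized inside [Frac Z[x,y]]. *)

From HB Require Import structures.
From mathcomp Require Import all_boot all_order all_algebra.
From mathcomp Require Import mpoly.
From mathcomp Require Import ring zify.
Set Implicit Arguments.
Unset Strict Implicit.
Unset Printing Implicit Defensive.

Import Order.TTheory GRing.Theory Num.Theory.
Local Open Scope ring_scope.

Local Notation "x %:F" := (@FracField.tofrac _ x).

Section PrimeIdeal.
Context {T : comNzRingType} {P : T -> Prop} (hP : is_prime_ideal P).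

Lemma prime_ideal0 : P 0. Proof. by case: hP. Qed.

Lemma prime_idealD a b : P a -> P b -> P (a + b).
Proof. by case: hP => _ hD _ _ _; apply: hD. Qed.

Lemma prime_idealMl a b : P b -> P (a * b).
Proof. by case: hP => _ _ hM _ _; apply: hM. Qed.

Lemma prime_idealMr a b : P a -> P (a * b).
Proof. by rewrite mulrC; apply: prime_idealMl. Qed.

Lemma prime_ideal_not1 : ~ P 1. Proof. by case: hP. Qed.

Lemma prime_idealM a b : P (a * b) -> P a \/ P b.
Proof. by case: hP => _ _ _ _; apply. Qed.

Lemma prime_idealB a b : P a -> P b -> P (a - b).
Proof. by move=> Pa Pb; rewrite -mulN1r; apply/prime_idealD/prime_idealMl. Qed.

Lemma prime_idealX x n : P (x ^+ n) -> P x.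
Proof.
elim: n => [|n IHn]; first by rewrite expr0 => /prime_ideal_not1.
by rewrite exprS => /prime_idealM [].
Qed.

(* [a] is invertible modulo [P] as soon as [a * c - 1] lies in [P]. *)
Lemma prime_ideal_transfer a c x y n :
  P (a * c - 1) -> P (x - a ^+ n * y) -> (P x <-> P y).
Proof.
move=> Pac Pxy; have Pa : ~ P a.
  move=> Pa; apply: prime_ideal_not1.
  by rewrite -[1](subKr (a * c)); apply/prime_idealB/Pac/prime_idealMr.
split=> [Px | Py].
- have : P (a ^+ n * y) by rewrite -[_ * y](subKr x); apply: prime_idealB.
  by case/prime_idealM => // /prime_idealX.
- by rewrite -[x](subrK (a ^+ n * y)); apply/prime_idealD/prime_idealMl.
Qed.

End PrimeIdeal.

Lemma prime_ideal_preim (T1 T2 : comNzRingType) (f : {rmorphism T1 -> T2}) (P : T2 -> Prop) :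
  is_prime_ideal P -> is_prime_ideal (fun x => P (f x)).
Proof.
move=> hP; split=> [|a b|a b||a b].
- by rewrite rmorph0; apply: prime_ideal0.
- by rewrite rmorphD; apply: prime_idealD.
- by rewrite rmorphM; apply: prime_idealMl.
- by rewrite rmorph1; apply: prime_ideal_not1.
- by rewrite rmorphM; apply: prime_idealM.
Qed.

Lemma mpoly_int_ind n (Q : {mpoly int[n]} -> Prop) :
  (forall c : int, Q c%:~R) -> (forall i, Q 'X_i) ->
  (forall p q, Q p -> Q q -> Q (p + q)) -> (forall p q, Q p -> Q q -> Q (p * q)) ->
  forall p, Q p.
Proof.
move=> QC QX QD QM; have Q1 : Q 1 by apply: QC 1.
elim/mpolyind=> [|c m p _ _ Qp]; first exact: QC 0.
apply: (QD) Qp; rewrite -[c]intz scaler_int -mulrzl; apply: (QM) => //.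
rewrite mpolyXE_id; apply: (big_ind Q Q1 QM) => i _.
by elim: (m i) => [|e IHe]; rewrite ?expr0 // exprS; apply: QM.
Qed.

Lemma mpoly_int_rmorph_eq n (S : nzRingType) (f g : {rmorphism {mpoly int[n]} -> S}) :
  (forall i, f 'X_i = g 'X_i) -> f =1 g.
Proof.
move=> fgX; apply: mpoly_int_ind => [c||p q fgp fgq|p q fgp fgq] //.
- by rewrite !rmorph_int.
- by rewrite !rmorphD fgp fgq.
- by rewrite !rmorphM fgp fgq.
Qed.

Lemma tofrac_inj (D : idomainType) : injective (@FracField.tofrac D).
Proof. by move=> f g /eqP; rewrite tofrac_eq => /eqP. Qed.

Definition bounded_denominators {A : Type} {D : idomainType}
    (psi : A -> {fraction D}) (z : D) :=
  forall q, exists K f, psi q * z%:F ^+ K = f%:F.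

Lemma mpoly_int_bounded_denominators n (D : idomainType)
    (psi : {rmorphism {mpoly int[n]} -> {fraction D}}) (z : D) :
  (forall i, exists K f, psi 'X_i * z%:F ^+ K = f%:F) -> bounded_denominators psi z.
Proof.
move=> boundX.
apply: mpoly_int_ind => // [c|p q [K [f Ef]] [L [g Eg]]|p q [K [f Ef]] [L [g Eg]]].
- by exists 0%N, c%:~R; rewrite !rmorph_int mulr1.
- exists (K + L)%N, (f * z ^+ L + g * z ^+ K).
  by rewrite rmorphD exprD tofracD !tofracM !tofracXn -Ef -Eg; ring.
- exists (K + L)%N, (f * g).
  by rewrite rmorphM exprD tofracM -Ef -Eg; ring.
Qed.

Section PrimeIdealLocalization.
Variables (A : comNzRingType) (D : idomainType).
Variables (psi : {rmorphism A -> {fraction D}}) (gam : D -> A) (z : D).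
Hypothesis psi_gam : forall f, psi (gam f) = f%:F.
Hypothesis psi_bounded : bounded_denominators psi z.
Variable P : D -> Prop.
Hypotheses (hP : is_prime_ideal P) (Pz : ~ P z).

(* The contraction along [psi] of the extension of [P] to [D[1/z]]. *)
Definition loc_ideal (q : A) := exists K f, P f /\ psi q * z%:F ^+ K = f%:F.

Lemma loc_ideal_prime : is_prime_ideal loc_ideal.
Proof.
split=> [|a b|a b|| a b].
- by exists 0%N, 0; rewrite rmorph0 mul0r tofrac0; split=> //; apply: (prime_ideal0 hP).
- move=> [K [f [Pf Ef]]] [L [g [Pg Eg]]]; exists (K + L)%N, (f * z ^+ L + g * z ^+ K).
  split; first by apply: (prime_idealD hP); apply: (prime_idealMr hP).
  by rewrite rmorphD exprD tofracD !tofracM !tofracXn -Ef -Eg; ring.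
- move=> [K [f [Pf Ef]]]; have [L [g Eg]] := psi_bounded a.
  exists (K + L)%N, (g * f); split; first exact: (prime_idealMl hP).
  by rewrite rmorphM exprD tofracM -Ef -Eg; ring.
- move=> [K [f [Pf]]]; rewrite rmorph1 mul1r -tofracXn => /tofrac_inj Ef.
  by move: Pf; rewrite -Ef => /(prime_idealX hP).
- move=> [K [f [Pf Ef]]].
  have [La [g Eg]] := psi_bounded a; have [Lb [h Eh]] := psi_bounded b.
  have E : g * h * z ^+ K = f * z ^+ (La + Lb).
    by apply: tofrac_inj; rewrite !tofracM !tofracXn -Eg -Eh -Ef rmorphM exprD; ring.
  have : P (g * h * z ^+ K) by rewrite E; apply: (prime_idealMr hP).
  case/(prime_idealM hP) => [/(prime_idealM hP) [Pg|Ph]|/(prime_idealX hP)] //.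
  + by left; exists La, g.
  + by right; exists Lb, h.
Qed.

Lemma loc_ideal_ker q : psi q = 0 -> loc_ideal q.
Proof.
by move=> psiq; exists 0%N, 0; rewrite psiq mul0r tofrac0; split=> //; apply: (prime_ideal0 hP).
Qed.

Lemma loc_idealE f : loc_ideal (gam f) <-> P f.
Proof.
split=> [[K [g [Pg]]] | Pf]; last by exists 0%N, f; rewrite psi_gam mulr1.
rewrite psi_gam -tofracXn -tofracM => /tofrac_inj Eg.
by move: Pg; rewrite -Eg => /(prime_idealM hP) [] // /(prime_idealX hP).
Qed.

End PrimeIdealLocalization.

HB.instance Definition _ := GRing.LRMorphism.copy alpha (comp_mpoly [tuple A3; B3]).
HB.instance Definition _ := GRing.LRMorphism.copy beta (comp_mpoly [tuple A3 ^+ 2 * B3; C3]).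

Lemma R2_generator_ind (Q : R2 -> Prop) : Q X2 -> Q Y2 -> forall i, Q 'X_i.
Proof.
move=> QX QY [[|[|//]] i_lt]; have -> : i_lt = isT by exact: eq_irrelevance.
- exact: QX.
- exact: QY.
Qed.

Lemma R3_generator_ind (Q : R3 -> Prop) : Q A3 -> Q B3 -> Q C3 -> forall i, Q 'X_i.
Proof.
move=> QA QB QC [[|[|[|//]]] i_lt]; have -> : i_lt = isT by exact: eq_irrelevance.
- exact: QA.
- exact: QB.
- exact: QC.
Qed.

Lemma alphaX : alpha X2 = A3. Proof. exact: comp_mpolyXU. Qed.
Lemma alphaY : alpha Y2 = B3. Proof. exact: comp_mpolyXU. Qed.
Lemma betaX : beta X2 = A3 ^+ 2 * B3. Proof. exact: comp_mpolyXU. Qed.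
Lemma betaY : beta Y2 = C3. Proof. exact: comp_mpolyXU. Qed.

Lemma X2_neq0 : X2 != 0. Proof. by rewrite -msize_poly_eq0 msizeX. Qed.
Lemma Y2_neq0 : Y2 != 0. Proof. by rewrite -msize_poly_eq0 msizeX. Qed.

(* The overlap [Z[a,b,c]/(a c - 1)] inside the fraction field of [Z[x,y]], seen
   from chart [k] ([a = x], [b = y], [c = 1/x]) and from chart [k + 1]
   ([a = 1/y], [b = x y^2], [c = y]). *)
Definition frac_from_prev : {rmorphism R3 -> {fraction R2}} :=
  mmap intr (tnth [tuple X2%:F; Y2%:F; X2%:F^-1]).
Definition frac_from_next : {rmorphism R3 -> {fraction R2}} :=
  mmap intr (tnth [tuple Y2%:F^-1; X2%:F * Y2%:F ^+ 2; Y2%:F]).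

Lemma mmapXU (h : 'I_3 -> {fraction R2}) i : mmap intr h 'X_i = h i.
Proof. by rewrite mmapX mmap1U. Qed.

Lemma frac_from_prevA : frac_from_prev A3 = X2%:F. Proof. exact: mmapXU. Qed.
Lemma frac_from_prevB : frac_from_prev B3 = Y2%:F. Proof. exact: mmapXU. Qed.
Lemma frac_from_prevC : frac_from_prev C3 = X2%:F^-1. Proof. exact: mmapXU. Qed.
Lemma frac_from_nextA : frac_from_next A3 = Y2%:F^-1. Proof. exact: mmapXU. Qed.
Lemma frac_from_nextB : frac_from_next B3 = X2%:F * Y2%:F ^+ 2. Proof. exact: mmapXU. Qed.
Lemma frac_from_nextC : frac_from_next C3 = Y2%:F. Proof. exact: mmapXU. Qed.

Lemma frac_from_prev_alpha f : frac_from_prev (alpha f) = f%:F.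
Proof.
move: f; apply: (mpoly_int_rmorph_eq (f := frac_from_prev \o alpha)
                                      (g := @FracField.tofrac _)).
apply: (R2_generator_ind (Q := fun p => frac_from_prev (alpha p) = p%:F)).
- by rewrite alphaX frac_from_prevA.
- by rewrite alphaY frac_from_prevB.
Qed.

Lemma frac_from_next_beta f : frac_from_next (beta f) = f%:F.
Proof.
move: f; apply: (mpoly_int_rmorph_eq (f := frac_from_next \o beta)
                                      (g := @FracField.tofrac _)).
apply: (R2_generator_ind (Q := fun p => frac_from_next (beta p) = p%:F)).
- rewrite betaX rmorphM rmorphXn frac_from_nextA frac_from_nextB mulrCA -exprMn.
  by rewrite mulVf ?expr1n ?mulr1 // tofrac_eq0 Y2_neq0.
- by rewrite betaY frac_from_nextC.
Qed.

Lemma frac_from_prev_overlap : frac_from_prev (A3 * C3 - 1) = 0.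
Proof.
rewrite rmorphB rmorphM rmorph1 frac_from_prevA frac_from_prevC.
by rewrite mulfV ?subrr // tofrac_eq0 X2_neq0.
Qed.

Lemma frac_from_next_overlap : frac_from_next (A3 * C3 - 1) = 0.
Proof.
rewrite rmorphB rmorphM rmorph1 frac_from_nextA frac_from_nextC.
by rewrite mulVf ?subrr // tofrac_eq0 Y2_neq0.
Qed.

Lemma frac_from_prev_bounded : bounded_denominators frac_from_prev X2.
Proof.
apply: mpoly_int_bounded_denominators.
apply: (R3_generator_ind (Q := fun p => exists K f, frac_from_prev p * X2%:F ^+ K = f%:F)).
- by exists 0%N, X2; rewrite frac_from_prevA mulr1.
- by exists 0%N, Y2; rewrite frac_from_prevB mulr1.
- by exists 1%N, 1; rewrite frac_from_prevC mulVf ?tofrac1 // tofrac_eq0 X2_neq0.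
Qed.

Lemma frac_from_next_bounded : bounded_denominators frac_from_next Y2.
Proof.
apply: mpoly_int_bounded_denominators.
apply: (R3_generator_ind (Q := fun p => exists K f, frac_from_next p * Y2%:F ^+ K = f%:F)).
- by exists 1%N, 1; rewrite frac_from_nextA mulVf ?tofrac1 // tofrac_eq0 Y2_neq0.
- by exists 0%N, (X2 * Y2 ^+ 2); rewrite frac_from_nextB mulr1 tofracM tofracXn.
- by exists 0%N, Y2; rewrite frac_from_nextC mulr1.
Qed.

Lemma glued_next P : is_prime_ideal P -> ~ P X2 -> exists Q, is_prime_ideal Q /\ glued P Q.
Proof.
move=> hP PX; pose p3 := loc_ideal frac_from_prev X2 P.
have p3_prime : is_prime_ideal p3 := loc_ideal_prime frac_from_prev_bounded hP PX.
exists (fun g => p3 (beta g)); split; first exact: prime_ideal_preim.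
exists p3; split=> // [|f].
- exact: loc_ideal_ker frac_from_prev_overlap.
- exact: iff_sym (loc_idealE frac_from_prev_alpha hP PX f).
Qed.

Lemma glued_prev Q : is_prime_ideal Q -> ~ Q Y2 -> exists P, is_prime_ideal P /\ glued P Q.
Proof.
move=> hQ QY; pose p3 := loc_ideal frac_from_next Y2 Q.
have p3_prime : is_prime_ideal p3 := loc_ideal_prime frac_from_next_bounded hQ QY.
exists (fun f => p3 (alpha f)); split; first exact: prime_ideal_preim.
exists p3; split=> // [|g].
- exact: loc_ideal_ker frac_from_next_overlap.
- exact: iff_sym (loc_idealE frac_from_next_beta hQ QY g).
Qed.

Lemma section_Ln_glued n s k P Q :
  section_Ln n s -> glued P Q -> (P (s k) <-> Q (s (k + 1))).
Proof.
move=> hs [p3 [hp3 p3_overlap Pp3 Qp3]]; rewrite Pp3 Qp3.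
have [h Eh] := hs k; apply: (prime_ideal_transfer hp3 p3_overlap (n := n)).
by rewrite Eh; apply: prime_idealMl.
Qed.

Lemma nonvanishing_open n s : section_Ln n s -> W_open (nonvanishing s).
Proof.
move=> hs; split=> [k P Q _ _ PQ | k].
- by rewrite /nonvanishing (section_Ln_glued k hs PQ).
- exists (eq^~ (s k)) => P _; split=> [nPs | [_ [-> //]]].
  by exists (s k).
Qed.

(* [e := chart_exponent N p q] solves [e (d - 1) + e (d + 1) = 2 N + 2 e d],
   [e (-1) = p], [e 0 = q]; the recurrence is what the transition function
   [x^(2 N)] imposes on the monomial [x^(e (d - 1)) y^(e d)] that continues
   [x^p y^q] from chart [k] to chart [k + d]. *)
Definition chart_exponent (N p q : nat) (d : int) : int :=
  N%:Z * (d * (d + 1)) - p%:Z * d + q%:Z * (d + 1).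

Section ChartExponent.
Variables (N p q : nat).
Hypotheses (p_lt : (p < N)%N) (q_lt : (q < N)%N).

Lemma chart_exponentN1 : chart_exponent N p q (-1) = p.
Proof. by rewrite /chart_exponent; ring. Qed.

Lemma chart_exponent0 : chart_exponent N p q 0 = q.
Proof. by rewrite /chart_exponent; ring. Qed.

Lemma chart_exponent_rec d :
  chart_exponent N p q (d - 1) + chart_exponent N p q (d + 1) =
  (N + N)%N%:Z + chart_exponent N p q d + chart_exponent N p q d.
Proof. by rewrite /chart_exponent PoszD; ring. Qed.

Lemma chart_exponent_ge0 d : 0 <= chart_exponent N p q d.
Proof.
rewrite /chart_exponent; have [d_ge0 | d_lt0] := leP 0 d.
- have : 0 <= d * (N%:Z * (d + 1) - p%:Z) by apply: mulr_ge0; lia.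
  have : 0 <= q%:Z * (d + 1) by apply: mulr_ge0; lia.
  nia.
- have : 0 <= (- d - 1) * (N%:Z * (- d) - q%:Z) by apply: mulr_ge0; nia.
  have : 0 <= p%:Z * (- d) by apply: mulr_ge0; lia.
  nia.
Qed.

Lemma absz_chart_exponent d : `|chart_exponent N p q d|%:Z = chart_exponent N p q d.
Proof. by rewrite gez0_abs ?chart_exponent_ge0. Qed.

Lemma chart_exponent_gt0 d : (1 <= d) || (d <= -2) -> 0 < chart_exponent N p q d.
Proof.
rewrite /chart_exponent => /orP [d_ge1 | d_le2].
- have : 0 < d * (N%:Z * (d + 1) - p%:Z) by apply: mulr_gt0; nia.
  have : 0 <= q%:Z * (d + 1) by apply: mulr_ge0; lia.
  nia.
- have : 0 < (- d - 1) * (N%:Z * (- d) - q%:Z) by apply: mulr_gt0; nia.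
  have : 0 <= p%:Z * (- d) by apply: mulr_ge0; lia.
  nia.
Qed.

End ChartExponent.

Lemma overlap_monomial (T : comNzRingType) (a b c : T) (e1 e2 e3 n : nat) :
  (e1 + e3 = n + 2 * e2)%N ->
  exists h, a ^+ e1 * b ^+ e2 - a ^+ n * ((a ^+ 2 * b) ^+ e2 * c ^+ e3) = h * (a * c - 1).
Proof.
move=> e_sum; exists (- (a ^+ e1 * b ^+ e2 * \sum_(i < e3) (a * c) ^+ i)).
have -> : a ^+ n * ((a ^+ 2 * b) ^+ e2 * c ^+ e3) = a ^+ e1 * b ^+ e2 * (a * c) ^+ e3.
  have a_pow : a ^+ n * (a ^+ 2) ^+ e2 = a ^+ e1 * a ^+ e3 by rewrite -exprM -!exprD e_sum.
  transitivity (a ^+ n * (a ^+ 2) ^+ e2 * b ^+ e2 * c ^+ e3); first by rewrite exprMn; ring.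
  by rewrite a_pow exprMn; ring.
have geom : (a * c) ^+ e3 = (a * c - 1) * \sum_(i < e3) (a * c) ^+ i + 1.
  by rewrite -subrX1 subrK.
by rewrite geom; ring.
Qed.

Lemma multiple_sum (T : nzRingType) (y : T) (I : Type) (r : seq I) (P : pred I)
    (F : I -> T) :
  (forall i, P i -> exists t, F i = t * y) -> exists t, \sum_(i <- r | P i) F i = t * y.
Proof.
move=> Fy; apply: (big_ind (fun x => exists t, x = t * y)) => // [|u v [t ->] [t' ->]].
- by exists 0; rewrite mul0r.
- by exists (t + t'); rewrite mulrDl.
Qed.

Lemma mpolyX2E (m : 'X_{1..2}) : 'X_[m] = X2 ^+ m ord0 * Y2 ^+ m ord_max.
Proof.
rewrite mpolyXE_id big_ord_recl big_ord1.
have -> : lift ord0 ord0 = Ordinal (isT : 1 < 2)%N by apply: val_inj.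
have -> : ord_max = Ordinal (isT : 1 < 2)%N by apply: val_inj.
by have -> : ord0 = Ordinal (isT : 0 < 2)%N by apply: val_inj.
Qed.

Lemma msupp2_lt (g : R2) N m :
  (msize g <= N)%N -> m \in msupp g -> (m ord0 < N)%N /\ (m ord_max < N)%N.
Proof.
move=> size_g /msize_mdeg_lt; rewrite mdegE big_ord_recl big_ord1.
have -> : lift ord0 ord0 = ord_max :> 'I_2 by apply: val_inj.
by split; lia.
Qed.

Lemma alpha_monomial a b : alpha (X2 ^+ a * Y2 ^+ b) = A3 ^+ a * B3 ^+ b.
Proof. by rewrite rmorphM !rmorphXn; congr (_ ^+ _ * _ ^+ _); apply: comp_mpolyXU. Qed.

Lemma beta_monomial a b : beta (X2 ^+ a * Y2 ^+ b) = (A3 ^+ 2 * B3) ^+ a * C3 ^+ b.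
Proof. by rewrite rmorphM !rmorphXn; congr (_ ^+ _ * _ ^+ _); apply: comp_mpolyXU. Qed.

Section ExtendSection.
Variables (N : nat) (g : R2) (k : int).
Hypothesis size_g : (msize g <= N)%N.

Definition chart_monomial (m : 'X_{1..2}) (d : int) : R2 :=
  X2 ^+ `|chart_exponent N (m ord0) (m ord_max) (d - 1)| *
  Y2 ^+ `|chart_exponent N (m ord0) (m ord_max) d|.

Definition extend_section (j : int) : R2 :=
  \sum_(m <- msupp g) g@_m *: chart_monomial m (j - k).

Lemma extend_section_at : extend_section k = g.
Proof.
rewrite [RHS]mpolyE; apply: eq_bigr => m _.
by rewrite subrr /chart_monomial sub0r chart_exponentN1 chart_exponent0 mpolyX2E.
Qed.

Lemma extend_section_Ln : section_Ln (N + N) extend_section.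
Proof.
move=> j; rewrite /in_overlap_ideal /extend_section !linear_sum mulr_sumr -sumrB big_seq.
apply: multiple_sum => m /(msupp2_lt size_g) [p_lt q_lt].
rewrite !linearZ /= -scalerAr -scalerBr.
suff [h ->] : in_overlap_ideal (alpha (chart_monomial m (j - k)) -
    A3 ^+ (N + N) * beta (chart_monomial m (j + 1 - k))).
  by exists (g@_m *: h); rewrite scalerAl.
rewrite /chart_monomial alpha_monomial beta_monomial.
have -> : j + 1 - k = j - k + 1 by ring.
rewrite addrK; apply: overlap_monomial.
apply/eqP; rewrite -eqz_nat !PoszD !absz_chart_exponent //; apply/eqP.
by rewrite chart_exponent_rec // PoszD; ring.
Qed.

Lemma extend_section_dvdY j : k < j -> exists t, extend_section j = t * Y2.
Proof.
move=> k_lt_j; rewrite /extend_section big_seq.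
apply: multiple_sum => m /(msupp2_lt size_g) [p_lt q_lt].
have : (0 < `|chart_exponent N (m ord0) (m ord_max) (j - k)|)%N.
  by rewrite -ltz_nat absz_chart_exponent // chart_exponent_gt0 //; apply/orP; left; lia.
rewrite /chart_monomial; case: `|chart_exponent _ _ _ (j - k)|%N => // e _.
exists (g@_m *: (X2 ^+ `|chart_exponent N (m ord0) (m ord_max) (j - k - 1)| * Y2 ^+ e)).
by rewrite -scalerAl exprS; congr (_ *: _); ring.
Qed.

Lemma extend_section_dvdX j : j < k -> exists t, extend_section j = t * X2.
Proof.
move=> j_lt_k; rewrite /extend_section big_seq.
apply: multiple_sum => m /(msupp2_lt size_g) [p_lt q_lt].
have : (0 < `|chart_exponent N (m ord0) (m ord_max) (j - k - 1)|)%N.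
  by rewrite -ltz_nat absz_chart_exponent // chart_exponent_gt0 //; apply/orP; right; lia.
rewrite /chart_monomial; case: `|chart_exponent _ _ _ (j - k - 1)|%N => // e _.
exists (g@_m *: (X2 ^+ e * Y2 ^+ `|chart_exponent N (m ord0) (m ord_max) (j - k)|)).
by rewrite -scalerAl exprS; congr (_ *: _); ring.
Qed.

End ExtendSection.

Section NonvanishingSaturated.
Variables (n : nat) (s : int -> R2) (U : int -> (R2 -> Prop) -> Prop) (k : int).
Hypothesis s_section : section_Ln n s.
Hypothesis U_glued : forall j P Q, is_prime_ideal P -> is_prime_ideal Q -> glued P Q ->
  (U j P <-> U (j + 1) Q).
Hypothesis s_dvdY : forall j, k < j -> exists t, s j = t * Y2.
Hypothesis s_dvdX : forall j, j < k -> exists t, s j = t * X2.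

Definition nonvanishing_in (j : int) :=
  forall P, is_prime_ideal P -> nonvanishing s j P -> U j P.

Lemma nonvanishing_in_succ j : k <= j -> nonvanishing_in j -> nonvanishing_in (j + 1).
Proof.
move=> k_le_j sU P hP sP; have PY : ~ P Y2.
  move=> PY; apply: sP; have [|t ->] := @s_dvdY (j + 1); first lia.
  exact: prime_idealMl.
have [Q [hQ QP]] := glued_prev hP PY.
apply/(U_glued j hQ hP QP)/sU => //.
by rewrite /nonvanishing (section_Ln_glued j s_section QP).
Qed.

Lemma nonvanishing_in_pred j : j <= k -> nonvanishing_in j -> nonvanishing_in (j - 1).
Proof.
move=> j_le_k sU P hP sP; have PX : ~ P X2.
  move=> PX; apply: sP; have [|t ->] := @s_dvdX (j - 1); first lia.
  exact: prime_idealMl.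
have [Q [hQ PQ]] := glued_next hP PX.
apply/(U_glued (j - 1) hP hQ PQ); rewrite subrK; apply: sU => //.
by move: sP; rewrite /nonvanishing (section_Ln_glued (j - 1) s_section PQ) subrK.
Qed.

Lemma nonvanishing_in_all : nonvanishing_in k -> forall j, nonvanishing_in j.
Proof.
move=> sUk j; have [k_le_j | j_lt_k] := lerP k j.
- have -> : j = k + (`|j - k|%N)%:Z by lia.
  elim: `|j - k|%N => [|d IHd]; first by rewrite addr0.
  by rewrite -addn1 PoszD addrA; apply: nonvanishing_in_succ => //; lia.
- have -> : j = k - (`|k - j|%N)%:Z by lia.
  elim: `|k - j|%N => [|d IHd]; first by rewrite subr0.
  by rewrite -addn1 PoszD opprD addrA; apply: nonvanishing_in_pred => //; lia.
Qed.

End NonvanishingSaturated.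

Theorem corollary2p5 :
  (forall (n : nat) (s : int -> R2), (1 <= n)%N -> section_Ln n s ->
     W_open (nonvanishing s)) /\
  (forall U : int -> (R2 -> Prop) -> Prop, W_open U ->
     forall (k : int) (P : R2 -> Prop), is_prime_ideal P -> U k P ->
     exists (n : nat) (s : int -> R2),
       [/\ (1 <= n)%N, section_Ln n s, nonvanishing s k P &
           forall (k' : int) (P' : R2 -> Prop), is_prime_ideal P' ->
             nonvanishing s k' P' -> U k' P']).
Proof.
split=> [n s _ | U [U_glued U_open] k P hP Ukp]; first exact: nonvanishing_open.
have [S S_basis] := U_open k; have [g [Sg Pg]] := (S_basis P hP).1 Ukp.
pose N := (msize g).+1; have size_g : (msize g <= N)%N by [].
exists (N + N)%N, (extend_section N g k); split=> //.
- exact: extend_section_Ln.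
- by rewrite /nonvanishing extend_section_at.
apply: (nonvanishing_in_all (extend_section_Ln k size_g) U_glued).
- exact: extend_section_dvdY.
- exact: extend_section_dvdX.
move=> P' hP'; rewrite /nonvanishing extend_section_at => Pg'.
by apply/S_basis => //; exists g.
Qed.
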